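(* Let $G=(V,E)$ be a Blowfish policy graph that is a tree with $V=\mathcal{T}\cup\{\bot\}$, $|\mathcal{T}|=k$, and let $\mathbf{P}_G$ be the matrix constructed from $G$ as described in the context (it is then a square invertible $k\times k$ matrix with inverse $\mathbf{P}_G^{-1}$). Then any pair of databases $\mathbf{y},\mathbf{z}\in\mathbb{R}^k$ are neighbors according to the Blowfish policy $G$ if and only if $\mathbf{P}_G^{-1}\mathbf{y}$ and $\mathbf{P}_G^{-1}\mathbf{z}$ are neighboring databases according to unbounded differential privacy, i.e. $\mathbf{P}_G^{-1}\mathbf{y}-\mathbf{P}_G^{-1}\mathbf{z}=\pm\mathbf{e}_i$ for some standard unit vector $\mathbf{e}_i$.
   Context: Construction of $\mathbf{P}_G$: rows indexed by $\mathcal{T}$, columns indexed by $E$; for an edge $(u,v)$ with $u,v\ne\bot$ the column has a $1$ in row $u$, a $-1$ in row $v$ and zeros elsewhere; for an edge $(u,\bot)$ the column has a $1$ in row $u$ and zeros elsewhere. Databases are histogram vectors in $\mathbb{R}^k$ indexed by $\mathcal{T}$. $\mathbf{y},\mathbf{z}$ are Blowfish neighbors under $G$ iff $\mathbf{y}-\mathbf{z}=\pm(\mathbf{e}_u-\mathbf{e}_v)$ for some edge $(u,v)\in E$ with $u,v\neq\bot$, or $\mathbf{y}-\mathbf{z}=\pm\mathbf{e}_u$ for some edge $(u,\bot)\in E$. *)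

From mathcomp Require Import all_boot all_order all_algebra.
Set Implicit Arguments. Unset Strict Implicit. Unset Printing Implicit Defensive.
Import Order.TTheory GRing.Theory Num.Theory.
Local Open Scope ring_scope.

(* Vertices of the policy graph: option 'I_k, with None = bot and
   Some i = the i-th domain value of T = 'I_k.
   The edge set E (|E| = k for a tree on k+1 vertices) is enumerated by
   edge : 'I_k -> vertex * vertex; column e of P_G corresponds to edge e. *)
Notation vertex k := (option 'I_k).

Definition adj k (edge : 'I_k -> vertex k * vertex k) : rel (vertex k) :=
  fun x y => [exists e, (edge e == (x, y)) || (edge e == (y, x))].

Definition simple_edges k (edge : 'I_k -> vertex k * vertex k) : Prop :=
  (forall e, (edge e).1 != (edge e).2) /\
  (forall e f, edge e = edge f \/ edge e = ((edge f).2, (edge f).1) -> e = f).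

Definition connected_graph k (edge : 'I_k -> vertex k * vertex k) : Prop :=
  forall x y : vertex k, connect (adj edge) x y.

Definition acyclic_graph k (edge : 'I_k -> vertex k * vertex k) : Prop :=
  forall (x0 : vertex k) (p : seq (vertex k)),
    (2 <= size p)%N -> uniq (x0 :: p) -> path (adj edge) x0 p ->
    ~~ adj edge (last x0 p) x0.

Definition is_tree k (edge : 'I_k -> vertex k * vertex k) : Prop :=
  [/\ simple_edges edge, connected_graph edge & acyclic_graph edge].

Definition vvec (R : nzRingType) k (x : vertex k) : 'cV[R]_k :=
  if x is Some i then delta_mx i 0 else 0.

Definition PG (R : nzRingType) k (edge : 'I_k -> vertex k * vertex k) : 'M[R]_k :=
  \matrix_(i, e) (vvec R (edge e).1 i 0 - vvec R (edge e).2 i 0).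

Definition blowfish_nbr (R : nzRingType) k (edge : 'I_k -> vertex k * vertex k)
  (y z : 'cV[R]_k) : Prop :=
  exists e, y - z = vvec R (edge e).1 - vvec R (edge e).2 \/
            y - z = - (vvec R (edge e).1 - vvec R (edge e).2).

Definition unbounded_dp_nbr (R : nzRingType) k (y z : 'cV[R]_k) : Prop :=
  exists i : 'I_k, y - z = delta_mx i 0 \/ y - z = - delta_mx i 0.

From mathcomp Require Import all_boot all_order all_algebra.
Set Implicit Arguments. Unset Strict Implicit. Unset Printing Implicit Defensive.
Import GRing.Theory.
Local Open Scope ring_scope.

(* Column e of P_G is e_u - e_v for the edge e = (u, v), so along any path
   x = x_0 - x_1 - ... - x_n the signed sum of the edge columns telescopes to
   e_x - e_(x_n).  Joining Some i to bot in the connected graph G thus puts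
   every unit vector e_i in the column space of P_G, which is therefore
   invertible.  Since P_G maps e_e to the e-th Blowfish difference, P_G^-1
   maps Blowfish differences bijectively onto the differences +-e_i. *)

Section PolicyMatrix.

Variables (R : nzRingType) (k : nat) (edge : 'I_k -> vertex k * vertex k).

Lemma PG_delta e :
  PG R edge *m delta_mx e 0 = vvec R (edge e).1 - vvec R (edge e).2.
Proof. by rewrite -colE; apply/matrixP => i j; rewrite !mxE (ord1 j). Qed.

Lemma PG_path_telescope x p :
  path (adj edge) x p ->
  exists c, PG R edge *m c = vvec R x - vvec R (last x p).
Proof.
elim: p x => [|y p IHp] x /=; first by exists 0; rewrite mulmx0 subrr.
case/andP=> /existsP[e xy_e] /IHp[c Pc].
case/orP: xy_e => /eqP edge_e.
- exists (c + delta_mx e 0).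
  by rewrite mulmxDr Pc PG_delta edge_e /= addrC addrA subrK.
- exists (c - delta_mx e 0).
  by rewrite mulmxBr Pc PG_delta edge_e /= opprB addrC addrA subrK.
Qed.

Lemma PG_delta_preimage :
  connected_graph edge -> forall i, exists c, PG R edge *m c = delta_mx i 0 :> 'cV_k.
Proof.
move=> connG i; have /connectP[p ip pbot] := connG (Some i) None.
by have [c Pc] := PG_path_telescope ip; exists c; rewrite Pc -pbot subr0.
Qed.

End PolicyMatrix.

Lemma unitmx_delta_preimage (R : comUnitRingType) n (A : 'M[R]_n) :
  (forall i, exists c, A *m c = delta_mx i 0 :> 'cV_n) -> A \in unitmx.
Proof.
move=> Asurj; have [f Af] := fin_all_exists Asurj.
suff /mulmx1_unit[] : A *m \matrix_(j, i) f i j 0 = 1%:M by [].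
apply/matrixP=> a b; have /(congr1 (fun v : 'cV_n => v a 0)) := Af b.
rewrite !mxE eqxx andbT => <-.
by apply: eq_bigr => j _; rewrite !mxE.
Qed.

Lemma invmx_mulmx_eq (R : comUnitRingType) n (A : 'M[R]_n) (v w : 'cV[R]_n) :
  A \in unitmx -> (invmx A *m v = w) <-> (v = A *m w).
Proof. by move=> Au; split=> [<- | ->]; rewrite ?mulKVmx ?mulKmx. Qed.

Theorem lemma4p8 (R : realFieldType) (k : nat)
  (edge : 'I_k -> vertex k * vertex k) :
  is_tree edge ->
  PG R edge \in unitmx /\
  (forall y z : 'cV[R]_k,
     blowfish_nbr edge y z <->
     unbounded_dp_nbr (invmx (PG R edge) *m y) (invmx (PG R edge) *m z)).
Proof.
case=> _ connG _; set P := PG R edge.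
have Pu : P \in unitmx by apply/unitmx_delta_preimage/PG_delta_preimage.
split=> // y z; rewrite /blowfish_nbr /unbounded_dp_nbr -mulmxBr.
split=> -[j nbr_j]; exists j; rewrite -PG_delta -mulmxN -/P in nbr_j *.
- by case: nbr_j => ->; [left | right]; apply/invmx_mulmx_eq.
- by case: nbr_j => /invmx_mulmx_eq-/(_ Pu) ->; [left | right].
Qed.
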